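(* Consider the barotropic two-phase setting described in the context. Let $(\alpha_1,\rho_1,\rho_2,u_1,u_2)$ be a smooth solution, with $\alpha_1\in(0,1)$ and $\rho_1,\rho_2>0$, of the homogeneous one-dimensional conservative SHTC system \begin{align*} &\partial_t(\alpha_1\rho)+\partial_x(\alpha_1\rho u)=0,\qquad \partial_t(\alpha_1\rho_1)+\partial_x(\alpha_1\rho_1u_1)=0,\qquad \partial_t\rho+\partial_x(\rho u)=0,\\ &\partial_t(\alpha_1\rho_1u_1+\alpha_2\rho_2u_2)+\partial_x(\alpha_1\rho_1u_1^2+\alpha_2\rho_2u_2^2+\alpha_1p_1+\alpha_2p_2)=0,\\ &\partial_t w+\partial_x\Big(\tfrac12u_1^2-\tfrac12u_2^2+\Psi_1(\rho_1)-\Psi_2(\rho_2)\Big)=0 . \end{align*} Then $W=(\alpha_1,\rho_1,\rho_2,u_1,u_2)^T$ satisfies $\partial_tW+A(W)\partial_xW=0$ with \[ A(W)=\begin{pmatrix} u & 0 & 0 & 0 & 0\\ \frac{\rho_1}{\alpha_1}(u_1-u) & u_1 & 0 & \rho_1 & 0\\ \frac{\rho_2}{\alpha_2}(u-u_2) & 0 & u_2 & 0 & \rho_2\\ \frac{p_1-p_2}{\rho} & \frac{a_1^2}{\rho_1} & 0 & u_1 & 0\\ \frac{p_1-p_2}{\rho} & 0 & \frac{a_2^2}{\rho_2} & 0 & u_2 \end{pmatrix}. \] Moreover, for every state $W$ with $\alpha_1\in(0,1)$, $\rho_1,\rho_2>0$: (i) $A R_{1\pm}=(u_1\pm a_1)R_{1\pm}$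 and $A R_{2\pm}=(u_2\pm a_2)R_{2\pm}$, where $R_{1\pm}=(0,1,0,\pm a_1/\rho_1,0)^T$ and $R_{2\pm}=(0,0,1,0,\pm a_2/\rho_2)^T$; (ii) $A R_C=u\,R_C$, where $R_C=\big(\varepsilon_1\varepsilon_2,\ \delta_1\varepsilon_2,\ \delta_2\varepsilon_1,\ (u-u_1)\varepsilon_2\gamma_1,\ -(u-u_2)\varepsilon_1\gamma_2\big)^T$ with $\delta_1=\frac{p_1-p_2}{\rho}-\frac{(u-u_1)^2}{\alpha_1}$, $\delta_2=\frac{p_1-p_2}{\rho}+\frac{(u-u_2)^2}{\alpha_2}$, $\varepsilon_i=\frac{(u-u_i)^2-a_i^2}{\rho_i}$, $\gamma_1=\frac{\alpha_1(p_1-p_2)-\rho a_1^2}{\alpha_1\rho_1\rho}$, $\gamma_2=-\frac{\alpha_2(p_1-p_2)+\rho a_2^2}{\alpha_2\rho_2\rho}$; (iii) viewing $\lambda_{i\pm}=u_i\pm a_i(\rho_i)$ and $\lambda_C=u=(\alpha_1\rho_1u_1+\alpha_2\rho_2u_2)/(\alpha_1\rho_1+\alpha_2\rho_2)$ as functions of $W$, one has $\nabla_W\lambda_{i\pm}\cdot R_{i\pm}=\pm\frac{1}{\rho_i}\frac{d(\rho_ia_i(\rho_i))}{d\rho_i}$ for $i=1,2$, and $\nabla_W\lambda_C\cdot R_C=0$ identically (the field associated with $\lambda_C$ is linearly degenerate).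
   Context: For $i=1,2$ let $p_i:(0,\infty)\to\mathbb{R}$ be smooth with $p_i'>0$, and let $a_i(\rho_i)=\sqrt{p_i'(\rho_i)}$ be the phase sound speed. Let $\varphi_i$ be an antiderivative of $\rho\mapsto p_i(\rho)/\rho^2$ and $\Psi_i(\rho)=\varphi_i(\rho)+p_i(\rho)/\rho$, so $\Psi_i'=a_i^2/\rho$ (in the isentropic case $\varphi_i$ is the specific internal energy and $\Psi_i$ the specific enthalpy; in the isothermal case $\varphi_i$ is the specific free energy and $\Psi_i$ the specific Gibbs energy). Primitive variables: volume fraction $\alpha_1\in(0,1)$, phase densities $\rho_1,\rho_2>0$, phase velocities $u_1,u_2$. Derived quantities: $\alpha_2=1-\alpha_1$, $\rho=\alpha_1\rho_1+\alpha_2\rho_2$, $c_i=\alpha_i\rho_i/\rho$, $u=c_1u_1+c_2u_2$, $w=u_1-u_2$, $p_i=p_i(\rho_i)$, $a_i=a_i(\rho_i)$. *)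

From Stdlib Require Import Reals Lra.
From Coquelicot Require Import Coquelicot.
Open Scope R_scope.

(** Vectors of R^5 and 5x5 matrices, indexed by 0..4 (other indices unused). *)
Definition vec := nat -> R.
Definition mat := nat -> nat -> R.

Definition v5 (a b c d e : R) : vec :=
  fun i => match i with
           | 0%nat => a | 1%nat => b | 2%nat => c | 3%nat => d | 4%nat => e
           | _ => 0 end.

Definition mulmv (A : mat) (v : vec) : vec :=
  fun i => A i 0%nat * v 0%nat + A i 1%nat * v 1%nat + A i 2%nat * v 2%nat
           + A i 3%nat * v 3%nat + A i 4%nat * v 4%nat.

Definition smooth_pos (p : R -> R) : Prop :=
  forall (n : nat) (r : R), 0 < r -> ex_derive_n p n r.

Definition sspeed (p : R -> R) (r : R) : R := sqrt (Derive p r).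

Definition Psi (p phi : R -> R) (r : R) : R := phi r + p r / r.

Definition alpha1 (W : vec) : R := W 0%nat.
Definition alpha2 (W : vec) : R := 1 - W 0%nat.
Definition rho1 (W : vec) : R := W 1%nat.
Definition rho2 (W : vec) : R := W 2%nat.
Definition u1 (W : vec) : R := W 3%nat.
Definition u2 (W : vec) : R := W 4%nat.
Definition rho (W : vec) : R := alpha1 W * rho1 W + alpha2 W * rho2 W.
Definition umix (W : vec) : R :=
  (alpha1 W * rho1 W * u1 W + alpha2 W * rho2 W * u2 W) / rho W.
Definition wrel (W : vec) : R := u1 W - u2 W.

Definition admissible (W : vec) : Prop :=
  0 < alpha1 W < 1 /\ 0 < rho1 W /\ 0 < rho2 W.

Definition cons_q (W : vec) : vec :=
  v5 (alpha1 W * rho W)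
     (alpha1 W * rho1 W)
     (rho W)
     (alpha1 W * rho1 W * u1 W + alpha2 W * rho2 W * u2 W)
     (wrel W).

Definition flux (p1 p2 phi1 phi2 : R -> R) (W : vec) : vec :=
  v5 (alpha1 W * rho W * umix W)
     (alpha1 W * rho1 W * u1 W)
     (rho W * umix W)
     (alpha1 W * rho1 W * u1 W ^ 2 + alpha2 W * rho2 W * u2 W ^ 2
      + alpha1 W * p1 (rho1 W) + alpha2 W * p2 (rho2 W))
     (/2 * u1 W ^ 2 - /2 * u2 W ^ 2
      + Psi p1 phi1 (rho1 W) - Psi p2 phi2 (rho2 W)).

Definition Amat (p1 p2 : R -> R) (W : vec) : mat :=
  let u := umix W in
  let dp := (p1 (rho1 W) - p2 (rho2 W)) / rho W in
  let a1 := sspeed p1 (rho1 W) in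
  let a2 := sspeed p2 (rho2 W) in
  fun i j =>
    match i, j with
    | 0%nat, 0%nat => u
    | 1%nat, 0%nat => rho1 W / alpha1 W * (u1 W - u)
    | 1%nat, 1%nat => u1 W
    | 1%nat, 3%nat => rho1 W
    | 2%nat, 0%nat => rho2 W / alpha2 W * (u - u2 W)
    | 2%nat, 2%nat => u2 W
    | 2%nat, 4%nat => rho2 W
    | 3%nat, 0%nat => dp
    | 3%nat, 1%nat => a1 ^ 2 / rho1 W
    | 3%nat, 3%nat => u1 W
    | 4%nat, 0%nat => dp
    | 4%nat, 2%nat => a2 ^ 2 / rho2 W
    | 4%nat, 4%nat => u2 W
    | _, _ => 0
    end.

(** Right eigenvectors; s is the sign (+1 or -1) *)
Definition Rac1 (p1 : R -> R) (s : R) (W : vec) : vec :=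
  v5 0 1 0 (s * sspeed p1 (rho1 W) / rho1 W) 0.
Definition Rac2 (p2 : R -> R) (s : R) (W : vec) : vec :=
  v5 0 0 1 0 (s * sspeed p2 (rho2 W) / rho2 W).

Definition delta1 (p1 p2 : R -> R) (W : vec) : R :=
  (p1 (rho1 W) - p2 (rho2 W)) / rho W - (umix W - u1 W) ^ 2 / alpha1 W.
Definition delta2 (p1 p2 : R -> R) (W : vec) : R :=
  (p1 (rho1 W) - p2 (rho2 W)) / rho W + (umix W - u2 W) ^ 2 / alpha2 W.
Definition eps1 (p1 : R -> R) (W : vec) : R :=
  ((umix W - u1 W) ^ 2 - sspeed p1 (rho1 W) ^ 2) / rho1 W.
Definition eps2 (p2 : R -> R) (W : vec) : R :=
  ((umix W - u2 W) ^ 2 - sspeed p2 (rho2 W) ^ 2) / rho2 W.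
Definition gamma1 (p1 p2 : R -> R) (W : vec) : R :=
  (alpha1 W * (p1 (rho1 W) - p2 (rho2 W)) - rho W * sspeed p1 (rho1 W) ^ 2)
  / (alpha1 W * rho1 W * rho W).
Definition gamma2 (p1 p2 : R -> R) (W : vec) : R :=
  - ((alpha2 W * (p1 (rho1 W) - p2 (rho2 W)) + rho W * sspeed p2 (rho2 W) ^ 2)
     / (alpha2 W * rho2 W * rho W)).

Definition RC (p1 p2 : R -> R) (W : vec) : vec :=
  v5 (eps1 p1 W * eps2 p2 W)
     (delta1 p1 p2 W * eps2 p2 W)
     (delta2 p1 p2 W * eps1 p1 W)
     ((umix W - u1 W) * eps2 p2 W * gamma1 p1 p2 W)
     (- ((umix W - u2 W) * eps1 p1 W * gamma2 p1 p2 W)).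

Definition lam1 (p1 : R -> R) (s : R) (W : vec) : R := u1 W + s * sspeed p1 (rho1 W).
Definition lam2 (p2 : R -> R) (s : R) (W : vec) : R := u2 W + s * sspeed p2 (rho2 W).
Definition lamC (W : vec) : R := umix W.

Definition upd (W : vec) (j : nat) (s : R) : vec :=
  fun k => if Nat.eqb k j then s else W k.
Definition partial (f : vec -> R) (j : nat) (W : vec) : R :=
  Derive (fun s => f (upd W j s)) (W j).
Definition gradDot (f : vec -> R) (W : vec) (v : vec) : R :=
  partial f 0%nat W * v 0%nat + partial f 1%nat W * v 1%nat
  + partial f 2%nat W * v 2%nat + partial f 3%nat W * v 3%nat
  + partial f 4%nat W * v 4%nat.

Definition Wfield (al r1 r2 v1 v2 : R -> R -> R) (t x : R) : vec :=
  v5 (al t x) (r1 t x) (r2 t x) (v1 t x) (v2 t x).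

Definition dtW (F : R -> R -> vec) (t x : R) : vec :=
  fun i => Derive (fun s => F s x i) t.
Definition dxW (F : R -> R -> vec) (t x : R) : vec :=
  fun i => Derive (fun y => F t y i) x.

From Pilot Require Import Defs.
From Stdlib Require Import Reals Lra Lia.
From Coquelicot Require Import Coquelicot.
Open Scope R_scope.

(* The chain rule turns the conservative system into dQ(W) W_t + dF(W) W_x = 0,
   where Q and F are the conserved variables and the fluxes.  Using
   Psi_i' = p_i'/rho_i = a_i^2/rho_i one checks dF(W) = dQ(W) A(W), and dQ(W) is
   injective on admissible states (its rows can be solved successively for the
   components), hence W_t + A(W) W_x = 0.  The remaining claims are direct
   computations; for the contact field, u = m/rho with m the mixture momentum has
   differential (dm - u drho)/rho, with the same dm and drho as in dQ. *)

Ltac eta_Derive :=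
  repeat match goal with
         | |- context [Derive (fun x : R => ?f x)] => change (fun x : R => f x) with f
         end.

Lemma admissible_rho_gt0 (W : vec) : admissible W -> 0 < rho W.
Proof. unfold admissible, rho, alpha1, alpha2, rho1, rho2; intros [[? ?] [? ?]]; nra. Qed.

Lemma sspeed_sq (p : R -> R) (r : R) : 0 <= Derive p r -> sspeed p r ^ 2 = Derive p r.
Proof. intros; apply pow2_sqrt; assumption. Qed.

Lemma is_derive_Psi (p phi : R -> R) (r : R) :
  0 < r -> ex_derive p r -> is_derive phi r (p r / r ^ 2) ->
  is_derive (Psi p phi) r (Derive p r / r).
Proof.
  intros Hr Hp Hphi; unfold Psi.
  auto_derive.
  - repeat split; auto. now exists (p r / r ^ 2). lra.
  - eta_Derive; rewrite (is_derive_unique _ _ _ Hphi). field. lra.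
Qed.

Definition drho (W X : vec) : R :=
  X 0%nat * (rho1 W - rho2 W) + alpha1 W * X 1%nat + alpha2 W * X 2%nat.

Definition dmom (W X : vec) : R :=
  X 0%nat * (rho1 W * u1 W - rho2 W * u2 W)
  + alpha1 W * (X 1%nat * u1 W + rho1 W * X 3%nat)
  + alpha2 W * (X 2%nat * u2 W + rho2 W * X 4%nat).

Definition dcons_q (W X : vec) : vec :=
  v5 (X 0%nat * rho W + alpha1 W * drho W X)
     (X 0%nat * rho1 W + alpha1 W * X 1%nat)
     (drho W X)
     (dmom W X)
     (X 3%nat - X 4%nat).

Definition dflux (p1 p2 : R -> R) (W X : vec) : vec :=
  v5 (X 0%nat * rho W * umix W + alpha1 W * dmom W X)
     (X 0%nat * rho1 W * u1 W + alpha1 W * (X 1%nat * u1 W + rho1 W * X 3%nat))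
     (dmom W X)
     (X 0%nat * (rho1 W * u1 W ^ 2 - rho2 W * u2 W ^ 2 + p1 (rho1 W) - p2 (rho2 W))
      + alpha1 W * (X 1%nat * (u1 W ^ 2 + Derive p1 (rho1 W))
                    + 2 * rho1 W * u1 W * X 3%nat)
      + alpha2 W * (X 2%nat * (u2 W ^ 2 + Derive p2 (rho2 W))
                    + 2 * rho2 W * u2 W * X 4%nat))
     (u1 W * X 3%nat - u2 W * X 4%nat
      + Derive p1 (rho1 W) / rho1 W * X 1%nat - Derive p2 (rho2 W) / rho2 W * X 2%nat).

Lemma Derive_cons_q_comp (A B C D E : R -> R) (t : R) (k : nat) :
  ex_derive A t -> ex_derive B t -> ex_derive C t -> ex_derive D t -> ex_derive E t ->
  Derive (fun s => cons_q (v5 (A s) (B s) (C s) (D s) (E s)) k) t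
  = dcons_q (v5 (A t) (B t) (C t) (D t) (E t))
            (v5 (Derive A t) (Derive B t) (Derive C t) (Derive D t) (Derive E t)) k.
Proof.
  intros.
  destruct k as [|[|[|[|[|k]]]]];
  cbv [cons_q dcons_q drho dmom v5 alpha1 alpha2 rho rho1 rho2 u1 u2 wrel];
  try apply Derive_const;
  apply is_derive_unique; auto_derive; repeat split; auto; eta_Derive; ring.
Qed.

Lemma Derive_flux_comp (p1 p2 phi1 phi2 A B C D E : R -> R) (t : R) (k : nat) :
  (forall r, 0 < r -> ex_derive p1 r) -> (forall r, 0 < r -> ex_derive p2 r) ->
  (forall r, 0 < r -> is_derive phi1 r (p1 r / r ^ 2)) ->
  (forall r, 0 < r -> is_derive phi2 r (p2 r / r ^ 2)) ->
  admissible (v5 (A t) (B t) (C t) (D t) (E t)) ->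
  ex_derive A t -> ex_derive B t -> ex_derive C t -> ex_derive D t -> ex_derive E t ->
  Derive (fun s => flux p1 p2 phi1 phi2 (v5 (A s) (B s) (C s) (D s) (E s)) k) t
  = dflux p1 p2 (v5 (A t) (B t) (C t) (D t) (E t))
          (v5 (Derive A t) (Derive B t) (Derive C t) (Derive D t) (Derive E t)) k.
Proof.
  intros Hp1 Hp2 Hphi1 Hphi2 HW HA HB HC HD HE.
  pose proof (admissible_rho_gt0 _ HW) as Hrho.
  destruct HW as [Ha [Hr1 Hr2]].
  cbv [v5 alpha1 rho1 rho2 rho alpha2] in Ha, Hr1, Hr2, Hrho.
  pose proof (is_derive_Psi _ _ _ Hr1 (Hp1 _ Hr1) (Hphi1 _ Hr1)) as HPsi1.
  pose proof (is_derive_Psi _ _ _ Hr2 (Hp2 _ Hr2) (Hphi2 _ Hr2)) as HPsi2.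
  destruct k as [|[|[|[|[|k]]]]];
  cbv [flux dflux dmom v5 alpha1 alpha2 rho rho1 rho2 u1 u2 umix];
  try apply Derive_const;
  apply is_derive_unique; auto_derive; repeat split; auto; eta_Derive.
  all: try (eexists; eassumption).
  all: try rewrite (is_derive_unique _ _ _ HPsi1), (is_derive_unique _ _ _ HPsi2).
  all: try lra.
  all: field; lra.
Qed.

Lemma dflux_eq_dcons_q_Amat (p1 p2 : R -> R) (W X : vec) (k : nat) :
  admissible W -> 0 <= Derive p1 (rho1 W) -> 0 <= Derive p2 (rho2 W) ->
  dflux p1 p2 W X k = dcons_q W (mulmv (Amat p1 p2 W) X) k.
Proof.
  intros HW Hc1 Hc2.
  pose proof (admissible_rho_gt0 _ HW) as Hrho.
  destruct HW as [Ha [Hr1 Hr2]].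
  destruct k as [|[|[|[|[|k]]]]];
  cbv [dflux dcons_q drho dmom mulmv Amat v5 umix rho alpha1 alpha2] in *; try reflexivity;
  rewrite <- ?(sspeed_sq _ _ Hc1), <- ?(sspeed_sq _ _ Hc2);
  field; repeat split; lra.
Qed.

Lemma dcons_q_add (W X Y : vec) (k : nat) :
  dcons_q W (fun i => X i + Y i) k = dcons_q W X k + dcons_q W Y k.
Proof.
  destruct k as [|[|[|[|[|k]]]]]; cbv [dcons_q drho dmom v5]; ring.
Qed.

Lemma dcons_q_inj (W X : vec) :
  admissible W -> (forall k, (k < 5)%nat -> dcons_q W X k = 0) ->
  forall i, (i < 5)%nat -> X i = 0.
Proof.
  intros HW HX.
  pose proof (admissible_rho_gt0 _ HW) as Hrho.
  destruct HW as [Ha [Hr1 Hr2]].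
  pose proof (HX 0%nat ltac:(lia)) as H0; pose proof (HX 1%nat ltac:(lia)) as H1.
  pose proof (HX 2%nat ltac:(lia)) as H2; pose proof (HX 3%nat ltac:(lia)) as H3.
  pose proof (HX 4%nat ltac:(lia)) as H4.
  cbv [dcons_q drho dmom v5] in H0, H1, H2, H3, H4.
  unfold rho, alpha1, alpha2 in *.
  assert (X0 : X 0%nat = 0).
  { rewrite H2 in H0. nra. }
  rewrite X0 in H1, H2, H3.
  assert (X1 : X 1%nat = 0) by nra.
  rewrite X1 in H2, H3.
  assert (X2 : X 2%nat = 0) by nra.
  replace (X 4%nat) with (X 3%nat) in H3 by lra.
  rewrite X2 in H3.
  assert (X3 : X 3%nat * (W 0%nat * rho1 W + (1 - W 0%nat) * rho2 W) = 0)
    by (rewrite <- H3; ring).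
  apply Rmult_integral in X3 as [X3 | ?]; [| lra].
  intros i Hi; destruct i as [|[|[|[|[|i]]]]]; lia || lra.
Qed.

Lemma quasilinear_of_conservative (p1 p2 : R -> R) (W Wt Wx : vec) :
  admissible W -> 0 <= Derive p1 (rho1 W) -> 0 <= Derive p2 (rho2 W) ->
  (forall k, (k < 5)%nat -> dcons_q W Wt k + dflux p1 p2 W Wx k = 0) ->
  forall i, (i < 5)%nat -> Wt i + mulmv (Amat p1 p2 W) Wx i = 0.
Proof.
  intros HW Hc1 Hc2 Hcons.
  apply (dcons_q_inj W (fun i => Wt i + mulmv (Amat p1 p2 W) Wx i) HW).
  intros k Hk.
  rewrite dcons_q_add, <- dflux_eq_dcons_q_Amat by assumption.
  exact (Hcons k Hk).
Qed.

Lemma quasilinear_form (p1 p2 phi1 phi2 : R -> R) (al r1 r2 v1 v2 : R -> R -> R) (t x : R) :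
  (forall r, 0 < r -> ex_derive p1 r) -> (forall r, 0 < r -> ex_derive p2 r) ->
  (forall r, 0 < r -> 0 <= Derive p1 r) -> (forall r, 0 < r -> 0 <= Derive p2 r) ->
  (forall r, 0 < r -> is_derive phi1 r (p1 r / r ^ 2)) ->
  (forall r, 0 < r -> is_derive phi2 r (p2 r / r ^ 2)) ->
  let F := Wfield al r1 r2 v1 v2 in
  admissible (F t x) ->
  (forall i, (i < 5)%nat ->
     ex_derive (fun s => F s x i) t /\ ex_derive (fun y => F t y i) x) ->
  (forall k, (k < 5)%nat ->
     Derive (fun s => cons_q (F s x) k) t
     + Derive (fun y => flux p1 p2 phi1 phi2 (F t y) k) x = 0) ->
  forall i, (i < 5)%nat -> dtW F t x i + mulmv (Amat p1 p2 (F t x)) (dxW F t x) i = 0.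
Proof.
  intros Hp1 Hp2 Hc1 Hc2 Hphi1 Hphi2 F HW Hd Hcons.
  destruct (Hd 0%nat ltac:(lia)) as [T0 X0]; destruct (Hd 1%nat ltac:(lia)) as [T1 X1].
  destruct (Hd 2%nat ltac:(lia)) as [T2 X2]; destruct (Hd 3%nat ltac:(lia)) as [T3 X3].
  destruct (Hd 4%nat ltac:(lia)) as [T4 X4].
  pose proof HW as [_ [Hr1 Hr2]].
  apply quasilinear_of_conservative; auto.
  intros k Hk; rewrite <- (Hcons k Hk); f_equal.
  - symmetry; exact (Derive_cons_q_comp _ _ _ _ _ t k T0 T1 T2 T3 T4).
  - symmetry; exact (Derive_flux_comp p1 p2 phi1 phi2 _ _ _ _ _ x k
                       Hp1 Hp2 Hphi1 Hphi2 HW X0 X1 X2 X3 X4).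
Qed.

Lemma Amat_Rac1 (p1 p2 : R -> R) (s : R) (W : vec) (i : nat) :
  rho1 W <> 0 -> s = 1 \/ s = -1 ->
  mulmv (Amat p1 p2 W) (Rac1 p1 s W) i = lam1 p1 s W * Rac1 p1 s W i.
Proof.
  intros Hr1 Hs.
  destruct i as [|[|[|[|[|i]]]]]; cbv [mulmv Amat Rac1 lam1 v5 u1];
  rewrite ?Rmult_0_r, ?Rmult_0_l; destruct Hs as [-> | ->]; field; auto.
Qed.

Lemma Amat_Rac2 (p1 p2 : R -> R) (s : R) (W : vec) (i : nat) :
  rho2 W <> 0 -> s = 1 \/ s = -1 ->
  mulmv (Amat p1 p2 W) (Rac2 p2 s W) i = lam2 p2 s W * Rac2 p2 s W i.
Proof.
  intros Hr2 Hs.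
  destruct i as [|[|[|[|[|i]]]]]; cbv [mulmv Amat Rac2 lam2 v5 u2];
  rewrite ?Rmult_0_r, ?Rmult_0_l; destruct Hs as [-> | ->]; field; auto.
Qed.

Lemma Amat_RC (p1 p2 : R -> R) (W : vec) (i : nat) :
  admissible W -> mulmv (Amat p1 p2 W) (RC p1 p2 W) i = lamC W * RC p1 p2 W i.
Proof.
  intros HW.
  pose proof (admissible_rho_gt0 _ HW) as Hrho.
  destruct HW as [Ha [Hr1 Hr2]].
  destruct i as [|[|[|[|[|i]]]]];
  cbv [mulmv Amat RC v5 lamC Defs.delta1 Defs.delta2 Defs.eps1 Defs.eps2
       Defs.gamma1 Defs.gamma2 alpha1 alpha2] in *;
  field; repeat split; lra.
Qed.

Lemma ex_derive_sspeed (p : R -> R) (r : R) :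
  ex_derive (Derive p) r -> 0 < Derive p r -> ex_derive (sspeed p) r.
Proof. intros; unfold sspeed; auto_derive; auto. Qed.

Lemma Derive_id_mul (f : R -> R) (r : R) :
  ex_derive f r -> Derive (fun x => x * f x) r = f r + r * Derive f r.
Proof. intros; apply is_derive_unique; auto_derive; auto; eta_Derive; ring. Qed.

Lemma gradDot_lam1_Rac1 (p1 : R -> R) (s : R) (W : vec) :
  rho1 W <> 0 -> ex_derive (sspeed p1) (rho1 W) ->
  gradDot (lam1 p1 s) W (Rac1 p1 s W)
  = s * (/ rho1 W * Derive (fun r => r * sspeed p1 r) (rho1 W)).
Proof.
  intros Hr1 Ha1.
  rewrite Derive_id_mul by assumption.
  cbv [gradDot partial upd lam1 Rac1 v5 u1 rho1 Nat.eqb] in *.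
  rewrite (is_derive_unique (fun r => W 3%nat + s * sspeed p1 r) _
             (s * Derive (sspeed p1) (W 1%nat))) by (auto_derive; auto; eta_Derive; ring).
  rewrite (is_derive_unique (fun v => v + s * sspeed p1 (W 1%nat)) _ 1)
    by (auto_derive; auto; ring).
  field; assumption.
Qed.

Lemma gradDot_lam2_Rac2 (p2 : R -> R) (s : R) (W : vec) :
  rho2 W <> 0 -> ex_derive (sspeed p2) (rho2 W) ->
  gradDot (lam2 p2 s) W (Rac2 p2 s W)
  = s * (/ rho2 W * Derive (fun r => r * sspeed p2 r) (rho2 W)).
Proof.
  intros Hr2 Ha2.
  rewrite Derive_id_mul by assumption.
  cbv [gradDot partial upd lam2 Rac2 v5 u2 rho2 Nat.eqb] in *.
  rewrite (is_derive_unique (fun r => W 4%nat + s * sspeed p2 r) _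
             (s * Derive (sspeed p2) (W 2%nat))) by (auto_derive; auto; eta_Derive; ring).
  rewrite (is_derive_unique (fun v => v + s * sspeed p2 (W 2%nat)) _ 1)
    by (auto_derive; auto; ring).
  field; assumption.
Qed.

Lemma gradDot_umix (W X : vec) :
  rho W <> 0 -> gradDot umix W X = (dmom W X - umix W * drho W X) / rho W.
Proof.
  intros Hrho.
  cbv [gradDot partial upd umix dmom drho alpha1 alpha2 rho rho1 rho2 u1 u2 Nat.eqb] in *.
  repeat match goal with
         | |- context [Derive ?f ?x] =>
             erewrite (is_derive_unique f x) by (auto_derive; [auto | reflexivity])
         end.
  field; assumption.
Qed.

Lemma gradDot_lamC_RC (p1 p2 : R -> R) (W : vec) :
  admissible W -> gradDot lamC W (RC p1 p2 W) = 0.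
Proof.
  intros HW.
  pose proof (admissible_rho_gt0 _ HW) as Hrho.
  destruct HW as [Ha [Hr1 Hr2]].
  unfold lamC; rewrite gradDot_umix by lra.
  cbv [RC dmom drho v5 Defs.delta1 Defs.delta2 Defs.eps1 Defs.eps2
       Defs.gamma1 Defs.gamma2 umix alpha1 alpha2 rho] in *.
  field; repeat split; lra.
Qed.

Theorem mainTheorem1 (p1 p2 phi1 phi2 : R -> R)
  (Hp1 : smooth_pos p1) (Hp2 : smooth_pos p2)
  (Hp1' : forall r, 0 < r -> 0 < Derive p1 r)
  (Hp2' : forall r, 0 < r -> 0 < Derive p2 r)
  (Hphi1 : forall r, 0 < r -> is_derive phi1 r (p1 r / r ^ 2))
  (Hphi2 : forall r, 0 < r -> is_derive phi2 r (p2 r / r ^ 2)) :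
  (* quasilinear form of smooth solutions of the conservative system *)
  (forall al r1 r2 v1 v2 : R -> R -> R,
     let F := Wfield al r1 r2 v1 v2 in
     (forall t x, admissible (F t x)) ->
     (forall t x (i : nat), (i < 5)%nat ->
        ex_derive (fun s => F s x i) t /\ ex_derive (fun y => F t y i) x) ->
     (forall t x (k : nat), (k < 5)%nat ->
        Derive (fun s => cons_q (F s x) k) t
        + Derive (fun y => flux p1 p2 phi1 phi2 (F t y) k) x = 0) ->
     forall t x (i : nat), (i < 5)%nat ->
       dtW F t x i + mulmv (Amat p1 p2 (F t x)) (dxW F t x) i = 0)
  /\
  (forall W : vec, admissible W ->
     (* (i) acoustic eigenpairs *)
     (forall s : R, (s = 1 \/ s = -1) ->
        (forall i, (i < 5)%nat ->
           mulmv (Amat p1 p2 W) (Rac1 p1 s W) i = lam1 p1 s W * Rac1 p1 s W i) /\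
        (forall i, (i < 5)%nat ->
           mulmv (Amat p1 p2 W) (Rac2 p2 s W) i = lam2 p2 s W * Rac2 p2 s W i))
     /\
     (* (ii) contact eigenpair *)
     (forall i, (i < 5)%nat ->
        mulmv (Amat p1 p2 W) (RC p1 p2 W) i = lamC W * RC p1 p2 W i)
     /\
     (* (iii) genuine nonlinearity coefficients and linear degeneracy *)
     (forall s : R, (s = 1 \/ s = -1) ->
        gradDot (lam1 p1 s) W (Rac1 p1 s W)
          = s * (/ rho1 W * Derive (fun r => r * sspeed p1 r) (rho1 W)) /\
        gradDot (lam2 p2 s) W (Rac2 p2 s W)
          = s * (/ rho2 W * Derive (fun r => r * sspeed p2 r) (rho2 W)))
     /\
     gradDot lamC W (RC p1 p2 W) = 0).
Proof.
  assert (Ep1 : forall r, 0 < r -> ex_derive p1 r) by exact (fun r => Hp1 1%nat r).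
  assert (Ep2 : forall r, 0 < r -> ex_derive p2 r) by exact (fun r => Hp2 1%nat r).
  assert (Ea1 : forall r, 0 < r -> ex_derive (sspeed p1) r)
    by (intros r Hr; apply ex_derive_sspeed; [exact (Hp1 2%nat r Hr) | auto]).
  assert (Ea2 : forall r, 0 < r -> ex_derive (sspeed p2) r)
    by (intros r Hr; apply ex_derive_sspeed; [exact (Hp2 2%nat r Hr) | auto]).
  split.
  - intros al r1 r2 v1 v2 F Hadm Hd Hcons t x.
    apply (quasilinear_form p1 p2 phi1 phi2); auto; intros r Hr; left; auto.
  - intros W HW; pose proof HW as [_ [Hr1 Hr2]].
    split; [| split; [| split]].
    + intros s Hs; split; intros i _.
      * apply Amat_Rac1; [lra | exact Hs].
      * apply Amat_Rac2; [lra | exact Hs].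
    + intros i _; exact (Amat_RC p1 p2 W i HW).
    + intros s _; split.
      * apply gradDot_lam1_Rac1; [lra | auto].
      * apply gradDot_lam2_Rac2; [lra | auto].
    + exact (gradDot_lamC_RC p1 p2 W HW).
Qed.
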